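(* Let $\bullet\in\{0,L_p,L,1_p,1\}$, $\mathbf{x}_0\in\mathbb{R}^d$ and $\mathbf{A}\in C^\bullet_{\mathbf{x}_0}(\mathbb{R}^d,\mathbb{R}^{m\times n})$. Then the pointwise Moore–Penrose pseudoinverse $\mathbf{A}^+:\mathbb{R}^d\to\mathbb{R}^{n\times m}$, $\mathbf{x}\mapsto \mathbf{A}(\mathbf{x})^+$, belongs to $C^\bullet_{\mathbf{x}_0}$ if and only if $\lim_{\mathbf{x}\to\mathbf{x}_0}\mathrm{rank}(\mathbf{A}(\mathbf{x}))=\mathrm{rank}(\mathbf{A}(\mathbf{x}_0))$ (i.e. the rank of $\mathbf{A}$ is constant on a neighborhood of $\mathbf{x}_0$).
   Context: Regularity classes: for finite-dimensional normed spaces $X,Y$, $D\subset X$, $f:D\to Y$, $x_0\in D$, write $f\in C^\bullet_{x_0}$ if, respectively, ($\bullet=0$) $f$ is continuous at $x_0$; ($L_p$) $f$ is pointwise Lipschitz at $x_0$, i.e. there are $r>0,L\ge 0$ with $x_0+rB_X\subset D$ and $\|f(x)-f(x_0)\|\le L\|x-x_0\|$ for $x\in x_0+rB_X$; ($L$) $f$ is Lipschitz on a neighborhood of $x_0$; ($1_p$) $f$ is Fréchet differentiable at $x_0$; ($1$) $f$ is differentiable on a neighborhood of $x_0$ and its derivative is continuous at $x_0$. $B_X$ is the closed unit ball. Matrices carry the spectral norm. *)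

From HB Require Import structures.
From Stdlib Require Import Reals Lra ClassicalEpsilon FunctionalExtensionality.
From mathcomp Require Import all_boot all_order all_algebra.

Set Implicit Arguments.
Unset Strict Implicit.
Unset Printing Implicit Defensive.

Import GRing.Theory.

Definition Req_bool (x y : R) : bool :=
  if Req_EM_T x y then true else false.

Lemma Req_boolP : Equality.axiom Req_bool.
Proof. by move=> x y; rewrite /Req_bool; case: Req_EM_T => H; constructor. Qed.

HB.instance Definition _ := hasDecEq.Build R Req_boolP.

Definition R_find (P : pred R) (n : nat) : option R :=
  if excluded_middle_informative (exists x, P x)
  then Some (epsilon (inhabits R0) (fun x => P x)) else None.

Lemma R_find_correct (P : pred R) n x : R_find P n = Some x -> P x.
Proof.
rewrite /R_find; case: excluded_middle_informative => // H [<-].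
exact: (epsilon_spec (inhabits R0) (fun x => P x) H).
Qed.

Lemma R_find_complete (P : pred R) : (exists x, P x) -> exists n, R_find P n.
Proof. by move=> H; exists 0%N; rewrite /R_find; case: excluded_middle_informative. Qed.

Lemma R_find_ext (P Q : pred R) : P =1 Q -> R_find P =1 R_find Q.
Proof. by move=> /functional_extensionality -> . Qed.

HB.instance Definition _ :=
  hasChoice.Build R R_find_correct R_find_complete R_find_ext.

Lemma R_addA : associative Rplus.
Proof. by move=> x y z; rewrite Rplus_assoc. Qed.

Lemma R_addNr : left_inverse R0 Ropp Rplus.
Proof. by move=> x; rewrite Rplus_comm Rplus_opp_r. Qed.

HB.instance Definition _ :=
  GRing.isZmodule.Build R R_addA Rplus_comm Rplus_0_l R_addNr.

Lemma R_mulA : associative Rmult.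
Proof. by move=> x y z; rewrite Rmult_assoc. Qed.
Lemma R_mulDl : left_distributive Rmult Rplus.
Proof. by move=> x y z; rewrite Rmult_plus_distr_r. Qed.
Lemma R_one_neq0 : R1 != R0.
Proof. by apply/eqP; exact: R1_neq_R0. Qed.

HB.instance Definition _ :=
  GRing.Zmodule_isComNzRing.Build R R_mulA Rmult_comm Rmult_1_l R_mulDl R_one_neq0.

Definition R_inv (x : R) : R := if x == R0 then R0 else Rinv x.

Lemma R_mulVf (x : R) : x != 0%R -> (R_inv x * x = 1)%R.
Proof.
move=> /eqP Hx; rewrite /R_inv; case: eqP => // _.
by apply: Rinv_l.
Qed.

Lemma R_inv0 : R_inv 0%R = 0%R.
Proof. by rewrite /R_inv eqxx. Qed.

HB.instance Definition _ := GRing.ComNzRing_isField.Build R R_mulVf R_inv0.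

Local Open Scope R_scope.

Definition vnorm (k : nat) (v : 'cV[R]_k) : R :=
  sqrt (\big[Rplus/R0]_(i < k) (v i ord0 * v i ord0)).

(* Spectral (operator) norm of a p x q matrix: the least upper bound of
   { |M v| : |v| <= 1 } (Euclidean norms).  The lub exists and is unique;
   we select it with Hilbert's epsilon. *)
Definition specnorm (p q : nat) (M : 'M[R]_(p, q)) : R :=
  epsilon (inhabits R0)
    (is_lub (fun r => exists v : 'cV[R]_q, vnorm v <= 1 /\ r = vnorm (M *m v)%R)).

Inductive regclass := C0 | CLp | CL | C1p | C1.

Definition cont_at (d p q : nat) (f : 'cV[R]_d -> 'M[R]_(p, q)) (x0 : 'cV[R]_d) : Prop :=
  forall eps, 0 < eps -> exists delta, 0 < delta /\
    forall x, vnorm (x - x0)%R <= delta -> specnorm (f x - f x0)%R < eps.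

Definition ptLipschitz_at (d p q : nat) (f : 'cV[R]_d -> 'M[R]_(p, q)) (x0 : 'cV[R]_d) : Prop :=
  exists r L, 0 < r /\ 0 <= L /\
    forall x, vnorm (x - x0)%R <= r -> specnorm (f x - f x0)%R <= L * vnorm (x - x0)%R.

Definition Lipschitz_near (d p q : nat) (f : 'cV[R]_d -> 'M[R]_(p, q)) (x0 : 'cV[R]_d) : Prop :=
  exists r L, 0 < r /\ 0 <= L /\
    forall x y, vnorm (x - x0)%R <= r -> vnorm (y - x0)%R <= r ->
      specnorm (f x - f y)%R <= L * vnorm (x - y)%R.

(* A linear map R^d -> R^{p x q} is represented by the images Df i of the
   standard basis vectors: h |-> sum_i h_i Df_i. *)
Definition applin (d p q : nat) (Df : 'I_d -> 'M[R]_(p, q)) (h : 'cV[R]_d) : 'M[R]_(p, q) :=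
  (\sum_(i < d) h i ord0 *: Df i)%R.

Definition has_Frechet_deriv (d p q : nat) (f : 'cV[R]_d -> 'M[R]_(p, q))
    (x : 'cV[R]_d) (Df : 'I_d -> 'M[R]_(p, q)) : Prop :=
  forall eps, 0 < eps -> exists delta, 0 < delta /\
    forall y, vnorm (y - x)%R <= delta ->
      specnorm (f y - f x - applin Df (y - x))%R <= eps * vnorm (y - x)%R.

Definition Frechet_diff_at (d p q : nat) (f : 'cV[R]_d -> 'M[R]_(p, q)) (x0 : 'cV[R]_d) : Prop :=
  exists Df, has_Frechet_deriv f x0 Df.

(* Differentiable on a neighborhood of x0, with derivative continuous at x0
   (continuity of a linear-map-valued function = continuity of each of its
   finitely many components Df(.) i, all norms being equivalent). *)
Definition C1_at (d p q : nat) (f : 'cV[R]_d -> 'M[R]_(p, q)) (x0 : 'cV[R]_d) : Prop :=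
  exists r (Df : 'cV[R]_d -> 'I_d -> 'M[R]_(p, q)), 0 < r /\
    (forall x, vnorm (x - x0)%R <= r -> has_Frechet_deriv f x (Df x)) /\
    (forall i, cont_at (fun x => Df x i) x0).

Definition inC (c : regclass) (d p q : nat) (f : 'cV[R]_d -> 'M[R]_(p, q)) (x0 : 'cV[R]_d) : Prop :=
  match c with
  | C0 => cont_at f x0
  | CLp => ptLipschitz_at f x0
  | CL => Lipschitz_near f x0
  | C1p => Frechet_diff_at f x0
  | C1 => C1_at f x0
  end.

Definition is_pinv (m n : nat) (A : 'M[R]_(m, n)) (B : 'M[R]_(n, m)) : Prop :=
  [/\ (A *m B *m A = A)%R, (B *m A *m B = B)%R, ((A *m B)^T = A *m B)%R & ((B *m A)^T = B *m A)%R].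

Definition pinv (m n : nat) (A : 'M[R]_(m, n)) : 'M[R]_(n, m) :=
  epsilon (inhabits 0%R) (is_pinv A).

(* All five classes are first reduced to ENTRYWISE statements
   about scalar functions (the spectral norm is squeezed between the largest
   entry and the sum of the entries), and each scalar class is shown to be
   closed under constants, sums, products, inverses of non-vanishing
   functions and local modification; differentiability is handled through
   Caratheodory's "continuous slope" characterisation.  Polynomial
   expressions such as determinants, adjugates and inverses of matrices then
   inherit the regularity of their entries.
   - Necessity: if A and A^+ are continuous then so are the projections
     P = A A^+ and I - P; rank is lower semicontinuous and
     rank P + rank (I - P) = m, so both ranks are locally constant.
   - Sufficiency: pick S, T with S A(x0) T = I_k (k = rank A(x0)).  Near x0,
     M x = S A(x) T stays invertible and, as the rank is constant,
     A = F G with F = A T and G = M^-1 S A both of full rank k.  Then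
     A^+ = G^T (G G^T)^-1 (F^T F)^-1 F^T, an algebraic expression in A. *)

From Pilot Require Import Defs.
From HB Require Import structures.
From Stdlib Require Import Reals Lra Psatz ClassicalEpsilon FunctionalExtensionality.
From mathcomp Require Import all_boot all_order all_algebra perm.
From mathcomp Require Import zify.
Set Implicit Arguments.
Unset Strict Implicit.
Unset Printing Implicit Defensive.
Import GRing.Theory.
Local Open Scope R_scope.

(* Finite sums of reals: monotonicity, positivity, triangle inequality.
   The last three restate ring lemmas with the heads Rplus/Rmult so that
   they can be used for rewriting in R_scope. *)
Lemma sum_le (I : Type) (r : seq I) (P : pred I) (F G : I -> R) :
  (forall i, P i -> F i <= G i) ->
  (\sum_(i <- r | P i) F i)%R <= (\sum_(i <- r | P i) G i)%R.
Proof.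
move=> H; apply: (big_ind2 (fun a b : R => a <= b)) => //.
- exact: Rle_refl.
- by move=> a b c e h1 h2; apply: Rplus_le_compat.
Qed.

Lemma sum_ge0 (I : Type) (r : seq I) (P : pred I) (F : I -> R) :
  (forall i, P i -> 0 <= F i) -> 0 <= (\sum_(i <- r | P i) F i)%R.
Proof.
move=> H; apply: (big_ind (fun a : R => 0 <= a)) => //.
- exact: Rle_refl.
- by move=> a b h1 h2; change (0 <= a + b); lra.
Qed.

Lemma Rabs_sum (I : Type) (r : seq I) (P : pred I) (F : I -> R) :
  Rabs (\sum_(i <- r | P i) F i)%R <= (\sum_(i <- r | P i) Rabs (F i))%R.
Proof.
apply: (big_ind2 (fun a b : R => Rabs a <= b)).
- by rewrite Rabs_R0; apply: Rle_refl.
- move=> a b c e h1 h2; change (Rabs (a + c) <= b + e).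
  by apply: Rle_trans (Rabs_triang _ _) _; lra.
- by move=> i _; apply: Rle_refl.
Qed.

Lemma sum_const_ord (k : nat) (a : R) : (\sum_(i < k) a)%R = INR k * a.
Proof.
elim: k => [|k IH]; first by rewrite big_ord0 /=; change (0 = 0 * a); ring.
rewrite big_ord_recr IH S_INR; change (INR k * a + a = (INR k + 1) * a); ring.
Qed.

Lemma sum_term_le (I : finType) (F : I -> R) (j : I) :
  (forall i, 0 <= F i) -> F j <= (\sum_i F i)%R.
Proof.
move=> H; rewrite (bigD1 j) //=.
have := @sum_ge0 _ (index_enum I) (fun i => i != j) F (fun i _ => H i).
by move=> h; change (F j <= F j + (\sum_(i | i != j) F i)%R); lra.
Qed.

Lemma sum_mulr (I : Type) (r : seq I) (P : pred I) (F : I -> R) (a : R) :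
  (\sum_(i <- r | P i) F i)%R * a = (\sum_(i <- r | P i) (F i * a))%R.
Proof. exact: GRing.mulr_suml. Qed.

Lemma sumRD (I : Type) (r : seq I) (P : pred I) (F G : I -> R) :
  (\sum_(i <- r | P i) (F i + G i))%R = (\sum_(i <- r | P i) F i)%R + (\sum_(i <- r | P i) G i)%R.
Proof. exact: big_split. Qed.

Lemma sumRM (I : Type) (r : seq I) (P : pred I) (F : I -> R) c :
  (\sum_(i <- r | P i) (c * F i))%R = c * (\sum_(i <- r | P i) F i)%R.
Proof. by symmetry; exact: GRing.mulr_sumr. Qed.

Lemma vnormE d (v : 'cV[R]_d) : vnorm v = sqrt (\sum_i (v i ord0 * v i ord0))%R.
Proof. by []. Qed.

Lemma sumsq_ge0 d (v : 'cV[R]_d) : 0 <= (\sum_i (v i ord0 * v i ord0))%R.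
Proof. by apply: sum_ge0 => i _; apply: Rle_0_sqr. Qed.

Lemma vnorm_ge0 d (v : 'cV[R]_d) : 0 <= vnorm v.
Proof. exact: sqrt_pos. Qed.

Lemma vnorm_sq d (v : 'cV[R]_d) : vnorm v * vnorm v = (\sum_i (v i ord0 * v i ord0))%R.
Proof. by rewrite vnormE sqrt_sqrt //; apply: sumsq_ge0. Qed.

Lemma vnorm0 d : vnorm (0 : 'cV[R]_d) = 0.
Proof.
rewrite vnormE big1 ?sqrt_0 // => i _; rewrite mxE; change (0 * 0 = 0); ring.
Qed.

Lemma vnorm_subrr d (x : 'cV[R]_d) : vnorm (x - x)%R = 0.
Proof. by rewrite subrr vnorm0. Qed.

Lemma vnorm_coord d (v : 'cV[R]_d) i : Rabs (v i ord0) <= vnorm v.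
Proof.
rewrite vnormE -sqrt_Rsqr_abs; apply: sqrt_le_1_alt.
rewrite /Rsqr; exact: (@sum_term_le _ (fun i => v i ord0 * v i ord0) i (fun k => Rle_0_sqr _)).
Qed.

Lemma vnorm_le_sum d (v : 'cV[R]_d) : vnorm v <= (\sum_i Rabs (v i ord0))%R.
Proof.
have H0 := @sum_ge0 _ (index_enum 'I_d) predT (fun i => Rabs (v i ord0)) (fun i _ => Rabs_pos _).
rewrite vnormE; apply: Rsqr_incr_0_var; last by [].
rewrite Rsqr_sqrt; last exact: sumsq_ge0.
rewrite /Rsqr.
set S := (\sum_i Rabs (v i ord0))%R.
have -> : S * S = (\sum_i (Rabs (v i ord0) * S))%R by exact: GRing.mulr_suml.
apply: sum_le => i _.
change (v i ord0 * v i ord0 <= Rabs (v i ord0) * S).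
have -> : v i ord0 * v i ord0 = Rabs (v i ord0) * Rabs (v i ord0).
  by rewrite -Rabs_mult Rabs_pos_eq //; apply: Rle_0_sqr.
apply: Rmult_le_compat_l; first exact: Rabs_pos.
exact: (@sum_term_le _ (fun i => Rabs (v i ord0)) i (fun k => Rabs_pos _)).
Qed.

Lemma vnorm_add2 d (a b : 'cV[R]_d) s : vnorm a <= s -> vnorm b <= s -> vnorm (a + b)%R <= 2 * s.
Proof.
move=> ha hb.
have ha0 := vnorm_ge0 a; have hb0 := vnorm_ge0 b.
have sa := vnorm_sq a; have sb := vnorm_sq b; have sab := vnorm_sq (a + b)%R.
have hab0 := vnorm_ge0 (a + b)%R.
have key : vnorm (a+b)%R * vnorm (a+b)%R <= 2 * (vnorm a * vnorm a) + 2 * (vnorm b * vnorm b).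
  rewrite sab sa sb.
  have -> : 2 * (\sum_i (a i ord0 * a i ord0))%R + 2 * (\sum_i (b i ord0 * b i ord0))%R
     = (\sum_i (Rplus (Rmult 2 (a i ord0 * a i ord0)) (Rmult 2 (b i ord0 * b i ord0))))%R.
    by rewrite sumRD !sumRM.
  apply: sum_le => i _; rewrite !mxE; change ((a i ord0 + b i ord0) * (a i ord0 + b i ord0)
     <= 2 * (a i ord0 * a i ord0) + 2 * (b i ord0 * b i ord0)).
  have h := Rle_0_sqr (a i ord0 - b i ord0); rewrite /Rsqr in h; clear -h; nra.
have h1 : vnorm a * vnorm a <= s * s by apply: Rmult_le_compat.
have h2 : vnorm b * vnorm b <= s * s by apply: Rmult_le_compat.
have h3 : vnorm (a+b)%R * vnorm (a+b)%R <= (2 * s) * (2 * s) by lra.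
apply: Rnot_lt_le => h4.
have : (2 * s) * (2 * s) < vnorm (a+b)%R * vnorm (a+b)%R by apply: Rmult_le_0_lt_compat; lra.
lra.
Qed.

Lemma sumsq_eq0 d (v : 'cV[R]_d) : (\sum_i (v i ord0 * v i ord0))%R = 0 -> v = 0%R.
Proof.
move=> H; apply/matrixP => i j; rewrite ord1 mxE.
have h1 := @sum_term_le _ (fun i => v i ord0 * v i ord0) i (fun k => Rle_0_sqr _).
have h2 := Rle_0_sqr (v i ord0).
rewrite H in h1; rewrite /Rsqr in h2; change (v i ord0 = 0); move: h1 h2; clear; move=> h1 h2; nra.
Qed.

Definition near d (x0 : 'cV[R]_d) (P : 'cV[R]_d -> Prop) :=
  exists delta, 0 < delta /\ forall x : 'cV[R]_d, vnorm (x - x0)%R <= delta -> P x.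

Lemma near_and d (x0 : 'cV[R]_d) P Q : near x0 P -> near x0 Q -> near x0 (fun x => P x /\ Q x).
Proof.
move=> [a [ha HP]] [b [hb HQ]]; exists (Rmin a b); split; first exact: Rmin_pos.
move=> x hx; split; [apply: HP | apply: HQ]; apply: Rle_trans hx _;
  [exact: Rmin_l | exact: Rmin_r].
Qed.

Lemma near_mono d (x0 : 'cV[R]_d) (P Q : _ -> Prop) : (forall x, P x -> Q x) -> near x0 P -> near x0 Q.
Proof. by move=> H [a [ha HP]]; exists a; split => // x /HP /H. Qed.

Lemma near_all d (x0 : 'cV[R]_d) (P : _ -> Prop) : (forall x, P x) -> near x0 P.
Proof. by move=> H; exists 1; split => //; lra. Qed.

Lemma near_refl d (x0 : 'cV[R]_d) (P : _ -> Prop) : near x0 P -> P x0.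
Proof. by move=> [a [ha HP]]; apply: HP; rewrite vnorm_subrr; lra. Qed.

Lemma near_finite d (x0 : 'cV[R]_d) (T : finType) (P : T -> 'cV[R]_d -> Prop) :
  (forall i, near x0 (P i)) -> near x0 (fun x => forall i, P i x).
Proof.
move=> H.
suff: near x0 (fun x => forall i, i \in enum T -> P i x).
  by apply: near_mono => x Hx i; apply: Hx; rewrite mem_enum.
elim: (enum T) => [|a s IH]; first by apply: near_all.
apply: near_mono (near_and (H a) IH) => x [h1 h2] i.
by rewrite in_cons => /orP [/eqP -> //| /h2].
Qed.

Lemma near_near d (x0 : 'cV[R]_d) (P : _ -> Prop) : near x0 P -> near x0 (fun x => near x P).
Proof.
move=> [a [ha HP]]; exists (a / 2); split; first lra.
move=> x hx; exists (a / 2); split; first lra.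
move=> y hy; apply: HP.
have -> : (y - x0 = (y - x) + (x - x0))%R by rewrite addrA subrK.
have h := vnorm_add2 hy hx. lra.
Qed.

Lemma near_small d (x0 : 'cV[R]_d) e : 0 < e -> near x0 (fun x => vnorm (x - x0)%R <= e).
Proof. by move=> he; exists e; split. Qed.

Definition near2 d (x0 : 'cV[R]_d) (P : 'cV[R]_d -> 'cV[R]_d -> Prop) :=
  exists delta, 0 < delta /\ forall y z : 'cV[R]_d,
    vnorm (y - x0)%R <= delta -> vnorm (z - x0)%R <= delta -> P y z.

Lemma near2_mono d (x0 : 'cV[R]_d) (P Q : _ -> _ -> Prop) :
  (forall y z, P y z -> Q y z) -> near2 x0 P -> near2 x0 Q.
Proof. by move=> H [a [ha HP]]; exists a; split => // y z hy hz; apply/H/HP. Qed.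

Lemma near2_and d (x0 : 'cV[R]_d) P Q : near2 x0 P -> near2 x0 Q -> near2 x0 (fun y z => P y z /\ Q y z).
Proof.
move=> [a [ha HP]] [b [hb HQ]]; exists (Rmin a b); split; first exact: Rmin_pos.
move=> y z hy hz; have ha' := Rmin_l a b; have hb' := Rmin_r a b.
split; [apply: HP | apply: HQ]; lra.
Qed.

Lemma near2_of_near d (x0 : 'cV[R]_d) (P : _ -> Prop) : near x0 P -> near2 x0 (fun y z => P y /\ P z).
Proof. by move=> [a [ha HP]]; exists a; split => // y z hy hz; split; apply: HP. Qed.

Lemma near2_finite d (x0 : 'cV[R]_d) (T : finType) (P : T -> 'cV[R]_d -> 'cV[R]_d -> Prop) :
  (forall i, near2 x0 (P i)) -> near2 x0 (fun y z => forall i, P i y z).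
Proof.
move=> H.
suff: near2 x0 (fun y z => forall i, i \in enum T -> P i y z).
  by apply: near2_mono => y z Hx i; apply: Hx; rewrite mem_enum.
elim: (enum T) => [|a s IH]; first by exists 1; split => //; lra.
apply: near2_mono (near2_and (H a) IH) => y z [h1 h2] i.
by rewrite in_cons => /orP [/eqP -> //| /h2].
Qed.

Lemma fin_ub (T : finType) (P : T -> R -> Prop) :
  (forall i a b, a <= b -> P i a -> P i b) -> (forall i, exists a, P i a) ->
  exists a, forall i, P i a.
Proof.
move=> Hm H.
suff: exists a, forall i, i \in enum T -> P i a.
  by move=> [a Ha]; exists a => i; apply: Ha; rewrite mem_enum.
elim: (enum T) => [|x s [a IH]]; first by exists 0.
have [b Hb] := H x; exists (Rmax a b) => i; rewrite in_cons => /orP [/eqP -> | hi].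
  by apply: Hm (Hb); apply: Rmax_r.
by apply: Hm (IH i hi); apply: Rmax_l.
Qed.

Lemma fin_choice (T : finType) (U : Type) (P : T -> U -> Prop) :
  (forall i, exists u, P i u) -> exists f : T -> U, forall i, P i (f i).
Proof.
move=> H; exists (fun i => proj1_sig (constructive_indefinite_description _ (H i))).
by move=> i; case: (constructive_indefinite_description _ _).
Qed.

Lemma prod_diff (a a0 b b0 : R) :
  Rabs (a * b - a0 * b0) <= Rabs a * Rabs (b - b0) + Rabs b0 * Rabs (a - a0).
Proof.
have -> : a * b - a0 * b0 = a * (b - b0) + b0 * (a - a0) by ring.
by rewrite -!Rabs_mult; apply: Rabs_triang.
Qed.

Lemma inv_diff (a a0 : R) : a <> 0 -> a0 <> 0 ->
  Rabs (/ a - / a0) = Rabs (a - a0) * (/ Rabs a * / Rabs a0).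
Proof.
move=> h1 h2.
have -> : / a - / a0 = (a0 - a) * (/ a * / a0) by field.
by rewrite Rabs_mult Rabs_mult !Rabs_inv -Rabs_Ropp Ropp_minus_distr.
Qed.

Lemma R_invE (x : R) : (x^-1)%R = Rinv x.
Proof.
rewrite /GRing.inv /=; rewrite /R_inv; case: eqP => [->|//].
by rewrite Rinv_0.
Qed.

Definition slin d (D : 'I_d -> R) (h : 'cV[R]_d) : R := (\sum_i h i ord0 * D i)%R.

Lemma slin_bound d (D : 'I_d -> R) (h : 'cV[R]_d) :
  Rabs (slin D h) <= (\sum_i Rabs (D i))%R * vnorm h.
Proof.
apply: Rle_trans (Rabs_sum _ _ _) _.
rewrite sum_mulr; apply: sum_le => i _.
change (Rabs (h i ord0 * D i) <= Rabs (D i) * vnorm h).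
rewrite Rabs_mult Rmult_comm; apply: Rmult_le_compat_l; first exact: Rabs_pos.
exact: vnorm_coord.
Qed.

Lemma slin_sub d (D1 D2 : 'I_d -> R) h :
  slin D1 h - slin D2 h = slin (fun i => D1 i - D2 i) h.
Proof.
rewrite /slin.
transitivity (\sum_i (h i ord0 * D1 i - h i ord0 * D2 i))%R; first by rewrite sumrB.
apply: eq_bigr => i _.
change (h i ord0 * D1 i - h i ord0 * D2 i = h i ord0 * (D1 i - D2 i)); ring.
Qed.

Lemma slin0 d (D : 'I_d -> R) : slin D 0%R = 0.
Proof.
rewrite /slin big1 // => i _; rewrite mxE; change (0 * D i = 0); ring.
Qed.

Lemma slin_zero d (h : 'cV[R]_d) : slin (fun _ => 0) h = 0.
Proof. rewrite /slin big1 // => i _; change (h i ord0 * 0 = 0); ring. Qed.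

Lemma slin_add d (F G : 'I_d -> R) h : slin (fun i => F i + G i) h = slin F h + slin G h.
Proof.
rewrite /slin -sumRD; apply: eq_bigr => i _.
change (h i ord0 * (F i + G i) = h i ord0 * F i + h i ord0 * G i); ring.
Qed.

Lemma slin_scale d (F : 'I_d -> R) c h : slin (fun i => c * F i) h = c * slin F h.
Proof.
rewrite /slin -sumRM; apply: eq_bigr => i _.
change (h i ord0 * (c * F i) = c * (h i ord0 * F i)); ring.
Qed.

Lemma slin_self d (h : 'cV[R]_d) (c : R) :
  slin (fun i => c * h i ord0) h = c * (\sum_k (h k ord0 * h k ord0))%R.
Proof.
rewrite /slin -sumRM; apply: eq_bigr => i _.
change (h i ord0 * (c * h i ord0) = c * (h i ord0 * h i ord0)); ring.
Qed.

Definition scont d (g : 'cV[R]_d -> R) x0 :=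
  forall eps, 0 < eps -> near x0 (fun x => Rabs (g x - g x0) < eps).

Definition sder d (g : 'cV[R]_d -> R) x (D : 'I_d -> R) :=
  forall eps, 0 < eps -> near x (fun y => Rabs (g y - g x - slin D (y - x)%R) <= eps * vnorm (y - x)%R).

Definition sptL d (g : 'cV[R]_d -> R) x0 :=
  exists L, 0 <= L /\ near x0 (fun x => Rabs (g x - g x0) <= L * vnorm (x - x0)%R).

Definition sLip d (g : 'cV[R]_d -> R) x0 :=
  exists L, 0 <= L /\ near2 x0 (fun y z => Rabs (g y - g z) <= L * vnorm (y - z)%R).

Definition sC1 d (g : 'cV[R]_d -> R) x0 :=
  exists D : 'cV[R]_d -> 'I_d -> R,
    near x0 (fun x => sder g x (D x)) /\ forall i, scont (fun x => D x i) x0.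

Definition sreg (c : regclass) d (g : 'cV[R]_d -> R) x0 :=
  match c with
  | C0 => scont g x0
  | CLp => sptL g x0
  | CL => sLip g x0
  | C1p => exists D, sder g x0 D
  | Defs.C1 => sC1 g x0
  end.

Lemma scont_const d (a : R) (x0 : 'cV[R]_d) : scont (fun _ => a) x0.
Proof.
move=> eps he; apply: near_all => x; rewrite Rminus_diag Rabs_R0; lra.
Qed.

Lemma scont_bound d (g : 'cV[R]_d -> R) x0 : scont g x0 ->
  near x0 (fun x => Rabs (g x) <= Rabs (g x0) + 1).
Proof.
move=> H; apply: near_mono (H 1 Rlt_0_1) => x hx.
have := Rabs_triang_inv (g x) (g x0); lra.
Qed.

Lemma scont_add d (g h : 'cV[R]_d -> R) x0 : scont g x0 -> scont h x0 ->
  scont (fun x => g x + h x) x0.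
Proof.
move=> Hg Hh eps he.
apply: near_mono (near_and (Hg (eps/2) ltac:(lra)) (Hh (eps/2) ltac:(lra))) => x [h1 h2].
have -> : g x + h x - (g x0 + h x0) = (g x - g x0) + (h x - h x0) by ring.
have := Rabs_triang (g x - g x0) (h x - h x0); lra.
Qed.

Lemma scont_mul d (g h : 'cV[R]_d -> R) x0 : scont g x0 -> scont h x0 ->
  scont (fun x => g x * h x) x0.
Proof.
move=> Hg Hh eps he.
set M := Rabs (g x0) + 1; set K := Rabs (h x0) + 1.
have hM : 0 < M by rewrite /M; have := Rabs_pos (g x0); lra.
have hK : 0 < K by rewrite /K; have := Rabs_pos (h x0); lra.
have e1 : 0 < eps / (2 * M) by apply: Rdiv_lt_0_compat; lra.
have e2 : 0 < eps / (2 * K) by apply: Rdiv_lt_0_compat; lra.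
apply: near_mono (near_and (scont_bound Hg) (near_and (Hg _ e2) (Hh _ e1))) => x [b [h1 h2]].
apply: Rle_lt_trans (prod_diff _ _ _ _) _.
have t1 : Rabs (g x) * Rabs (h x - h x0) <= M * (eps / (2 * M)).
  apply: Rmult_le_compat; [exact: Rabs_pos | exact: Rabs_pos | exact: b | lra].
have t2 : Rabs (h x0) * Rabs (g x - g x0) <= Rabs (h x0) * (eps / (2 * K)).
  apply: Rmult_le_compat_l; [exact: Rabs_pos | lra].
have t3 : Rabs (h x0) * (eps / (2 * K)) < K * (eps / (2 * K)).
  by apply: Rmult_lt_compat_r => //; rewrite /K; lra.
have q1 : M * (eps / (2 * M)) = eps / 2 by field; lra.
have q2 : K * (eps / (2 * K)) = eps / 2 by field; lra.
lra.
Qed.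

Lemma scont_away d (g : 'cV[R]_d -> R) x0 : scont g x0 -> g x0 <> 0 ->
  near x0 (fun x => Rabs (g x0) / 2 <= Rabs (g x)).
Proof.
move=> H hg.
have hp : 0 < Rabs (g x0) by apply: Rabs_pos_lt.
apply: near_mono (H (Rabs (g x0) / 2) ltac:(lra)) => x hx.
have := Rabs_triang_inv (g x0) (g x); rewrite -Rabs_Ropp Ropp_minus_distr in hx; lra.
Qed.

Lemma scont_inv d (g : 'cV[R]_d -> R) x0 : scont g x0 -> g x0 <> 0 ->
  scont (fun x => / g x) x0.
Proof.
move=> H hg eps he.
have hp : 0 < Rabs (g x0) by apply: Rabs_pos_lt.
have cc : 0 < Rabs (g x0) * Rabs (g x0) by apply: Rmult_lt_0_compat.
have e1 : 0 < eps * (Rabs (g x0) * Rabs (g x0)) / 2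
  by apply: Rdiv_lt_0_compat; [apply: Rmult_lt_0_compat | lra].
apply: near_mono (near_and (scont_away H hg) (H _ e1)) => x [h1 h2].
have gx : g x <> 0 by move=> e; rewrite e Rabs_R0 in h1; lra.
rewrite inv_diff //.
have hx : 0 < Rabs (g x) by apply: Rabs_pos_lt.
have u0 := Rabs_pos (g x - g x0).
move: h1 h2 hx cc e1 hp u0; move: (Rabs (g x0)) (Rabs (g x)) (Rabs (g x - g x0)) => c a u h1 h2 hx cc e1 hp u0.
have i1 : / a <= 2 / c.
  rewrite /Rdiv; apply: Rle_trans (_ : / (c / 2) <= _); first apply: Rinv_le_contravar; try lra.
  by rewrite Rinv_div; lra.
have i3 : 0 < / c by apply: Rinv_0_lt_compat.
apply: (Rle_lt_trans _ (u * (2 / c * / c))).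
  apply: Rmult_le_compat_l => //.
  by apply: Rmult_le_compat_r; lra.
have -> : 2 / c * / c = 2 / (c * c) by field; lra.
apply: (Rlt_le_trans _ ((eps * (c * c) / 2) * (2 / (c * c)))).
  apply: Rmult_lt_compat_r => //; apply: Rdiv_lt_0_compat; lra.
right; field; lra.
Qed.

Lemma scont_local d (g h : 'cV[R]_d -> R) x0 : near x0 (fun x => g x = h x) ->
  scont g x0 -> scont h x0.
Proof.
move=> E H eps he; have e0 := near_refl E.
by apply: near_mono (near_and E (H eps he)) => x [-> h1]; rewrite -e0.
Qed.

Lemma scont_ext d (f g : 'cV[R]_d -> R) x0 : (forall y, f y = g y) -> scont f x0 -> scont g x0.
Proof. by move=> E; apply: scont_local; apply: near_all. Qed.

Lemma sptL_cont d (g : 'cV[R]_d -> R) x0 : sptL g x0 -> scont g x0.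
Proof.
move=> [L [hL H]] eps he.
have e1 : 0 < eps / (L + 1) by apply: Rdiv_lt_0_compat; lra.
apply: near_mono (near_and H (near_small x0 e1)) => x [h1 h2].
have v0 := vnorm_ge0 (x - x0)%R.
move: h1 h2 v0; move: (vnorm (x - x0)%R) (Rabs (g x - g x0)) => v a h1 h2 v0.
apply: Rle_lt_trans h1 _.
apply: (Rle_lt_trans _ (L * (eps / (L + 1)))); first by apply: Rmult_le_compat_l.
apply: (Rlt_le_trans _ ((L + 1) * (eps / (L + 1)))); first by apply: Rmult_lt_compat_r; lra.
right; field; lra.
Qed.

Lemma sptL_const d (a : R) (x0 : 'cV[R]_d) : sptL (fun _ => a) x0.
Proof.
exists 0; split; first lra; apply: near_all => x.
rewrite Rminus_diag Rabs_R0 Rmult_0_l; lra.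
Qed.

Lemma sptL_add d (g h : 'cV[R]_d -> R) x0 : sptL g x0 -> sptL h x0 ->
  sptL (fun x => g x + h x) x0.
Proof.
move=> [L1 [h1 H1]] [L2 [h2 H2]]; exists (L1 + L2); split; first lra.
apply: near_mono (near_and H1 H2) => x [a1 a2].
have -> : g x + h x - (g x0 + h x0) = (g x - g x0) + (h x - h x0) by ring.
apply: Rle_trans (Rabs_triang _ _) _; lra.
Qed.

Lemma sptL_mul d (g h : 'cV[R]_d -> R) x0 : sptL g x0 -> sptL h x0 ->
  sptL (fun x => g x * h x) x0.
Proof.
move=> Hg Hh; have B := scont_bound (sptL_cont Hg).
move: Hg Hh => [L1 [h1 H1]] [L2 [h2 H2]].
set M := Rabs (g x0) + 1.
have hM : 0 <= M by rewrite /M; have := Rabs_pos (g x0); lra.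
exists (M * L2 + Rabs (h x0) * L1); split.
  by have := Rabs_pos (h x0); move=> ?; apply: Rplus_le_le_0_compat; apply: Rmult_le_pos.
apply: near_mono (near_and B (near_and H1 H2)) => x [b [a1 a2]].
apply: Rle_trans (prod_diff _ _ _ _) _.
have v0 := vnorm_ge0 (x - x0)%R.
have t1 : Rabs (g x) * Rabs (h x - h x0) <= M * (L2 * vnorm (x - x0)%R)
  by apply: Rmult_le_compat => //; apply: Rabs_pos.
have t2 : Rabs (h x0) * Rabs (g x - g x0) <= Rabs (h x0) * (L1 * vnorm (x - x0)%R)
  by apply: Rmult_le_compat_l => //; apply: Rabs_pos.
move: t1 t2; move: (vnorm (x - x0)%R) => v t1 t2; clear -t1 t2; move=> *; nra.
Qed.

Lemma sptL_inv d (g : 'cV[R]_d -> R) x0 : sptL g x0 -> g x0 <> 0 ->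
  sptL (fun x => / g x) x0.
Proof.
move=> Hg hg; have A := scont_away (sptL_cont Hg) hg.
move: Hg => [L [hL H]].
have hp : 0 < Rabs (g x0) by apply: Rabs_pos_lt.
exists (L * (2 / (Rabs (g x0) * Rabs (g x0)))); split.
  apply: Rmult_le_pos => //; apply: Rlt_le; apply: Rdiv_lt_0_compat; [lra|nra].
apply: near_mono (near_and A H) => x [h1 h2].
have gx : g x <> 0 by move=> e; rewrite e Rabs_R0 in h1; lra.
rewrite inv_diff //.
have hx : 0 < Rabs (g x) by apply: Rabs_pos_lt.
have u0 := Rabs_pos (g x - g x0); have v0 := vnorm_ge0 (x - x0)%R.
move: h1 h2 hx hp u0 v0; move: (Rabs (g x0)) (Rabs (g x)) (Rabs (g x - g x0)) (vnorm (x - x0)%R)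
  => c a u v h1 h2 hx hp u0 v0.
have i1 : / a <= 2 / c.
  rewrite /Rdiv; apply: Rle_trans (_ : / (c / 2) <= _); first apply: Rinv_le_contravar; try lra.
  by rewrite Rinv_div; lra.
have i3 : 0 < / c by apply: Rinv_0_lt_compat.
have i4 : 0 < / a by apply: Rinv_0_lt_compat.
apply: (Rle_trans _ ((L * v) * (2 / c * / c))).
  apply: Rmult_le_compat => //; first by apply: Rmult_le_pos; lra.
  by apply: Rmult_le_compat_r; lra.
have -> : 2 / c * / c = 2 / (c * c) by field; lra.
right; ring.
Qed.

Lemma sptL_local d (g h : 'cV[R]_d -> R) x0 : near x0 (fun x => g x = h x) ->
  sptL g x0 -> sptL h x0.
Proof.
move=> E [L [hL H]]; exists L; split => //; have e0 := near_refl E.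
by apply: near_mono (near_and E H) => x [<- h1]; rewrite -e0.
Qed.

Lemma sLip_ptL d (g : 'cV[R]_d -> R) x0 : sLip g x0 -> sptL g x0.
Proof.
move=> [L [hL [a [ha H]]]]; exists L; split => //; exists a; split => // x hx.
by apply: H => //; rewrite vnorm_subrr; lra.
Qed.

Lemma sLip_const d (a : R) (x0 : 'cV[R]_d) : sLip (fun _ => a) x0.
Proof.
exists 0; split; first lra; exists 1; split; first lra.
move=> y z _ _; rewrite Rminus_diag Rabs_R0 Rmult_0_l; lra.
Qed.

Lemma sLip_add d (g h : 'cV[R]_d -> R) x0 : sLip g x0 -> sLip h x0 ->
  sLip (fun x => g x + h x) x0.
Proof.
move=> [L1 [h1 H1]] [L2 [h2 H2]]; exists (L1 + L2); split; first lra.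
apply: near2_mono (near2_and H1 H2) => y z [a1 a2].
have -> : g y + h y - (g z + h z) = (g y - g z) + (h y - h z) by ring.
apply: Rle_trans (Rabs_triang _ _) _; lra.
Qed.

Lemma sLip_mul d (g h : 'cV[R]_d -> R) x0 : sLip g x0 -> sLip h x0 ->
  sLip (fun x => g x * h x) x0.
Proof.
move=> Hg Hh.
have Bg := near2_of_near (scont_bound (sptL_cont (sLip_ptL Hg))).
have Bh := near2_of_near (scont_bound (sptL_cont (sLip_ptL Hh))).
move: Hg Hh => [L1 [h1 H1]] [L2 [h2 H2]].
set M := Rabs (g x0) + 1; set K := Rabs (h x0) + 1.
have hM : 0 <= M by rewrite /M; have := Rabs_pos (g x0); lra.
have hK : 0 <= K by rewrite /K; have := Rabs_pos (h x0); lra.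
exists (M * L2 + K * L1); split.
  by apply: Rplus_le_le_0_compat; apply: Rmult_le_pos.
apply: near2_mono (near2_and Bg (near2_and Bh (near2_and H1 H2))) => y z [[b1 _] [[_ b2] [a1 a2]]].
apply: Rle_trans (prod_diff _ _ _ _) _.
have v0 := vnorm_ge0 (y - z)%R.
have t1 : Rabs (g y) * Rabs (h y - h z) <= M * (L2 * vnorm (y - z)%R)
  by apply: Rmult_le_compat => //; apply: Rabs_pos.
have t2 : Rabs (h z) * Rabs (g y - g z) <= K * (L1 * vnorm (y - z)%R)
  by apply: Rmult_le_compat => //; apply: Rabs_pos.
move: t1 t2; move: (vnorm (y - z)%R) => v t1 t2; clear -t1 t2; move=> *; nra.
Qed.

Lemma sLip_inv d (g : 'cV[R]_d -> R) x0 : sLip g x0 -> g x0 <> 0 ->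
  sLip (fun x => / g x) x0.
Proof.
move=> Hg hg; have A := near2_of_near (scont_away (sptL_cont (sLip_ptL Hg)) hg).
move: Hg => [L [hL H]].
have hp : 0 < Rabs (g x0) by apply: Rabs_pos_lt.
exists (L * (4 / (Rabs (g x0) * Rabs (g x0)))); split.
  apply: Rmult_le_pos => //; apply: Rlt_le; apply: Rdiv_lt_0_compat; [lra|nra].
apply: near2_mono (near2_and A H) => y z [[h1 h1'] h2].
have gy : g y <> 0 by move=> e; rewrite e Rabs_R0 in h1; lra.
have gz : g z <> 0 by move=> e; rewrite e Rabs_R0 in h1'; lra.
rewrite inv_diff //.
have hy : 0 < Rabs (g y) by apply: Rabs_pos_lt.
have hz : 0 < Rabs (g z) by apply: Rabs_pos_lt.
have u0 := Rabs_pos (g y - g z); have v0 := vnorm_ge0 (y - z)%R.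
move: h1 h1' h2 hy hz hp u0 v0; move: (Rabs (g x0)) (Rabs (g y)) (Rabs (g z)) (Rabs (g y - g z)) (vnorm (y - z)%R)
  => c a b u v h1 h1' h2 hy hz hp u0 v0.
have i1 : / a <= 2 / c.
  rewrite /Rdiv; apply: Rle_trans (_ : / (c / 2) <= _); first apply: Rinv_le_contravar; try lra.
  by rewrite Rinv_div; lra.
have i2 : / b <= 2 / c.
  rewrite /Rdiv; apply: Rle_trans (_ : / (c / 2) <= _); first apply: Rinv_le_contravar; try lra.
  by rewrite Rinv_div; lra.
have i3 : 0 < / b by apply: Rinv_0_lt_compat.
have i4 : 0 < / a by apply: Rinv_0_lt_compat.
apply: (Rle_trans _ ((L * v) * (2 / c * (2 / c)))).
  apply: Rmult_le_compat => //; first by apply: Rmult_le_pos; lra.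
  apply: Rmult_le_compat; lra.
have -> : 2 / c * (2 / c) = 4 / (c * c) by field; lra.
right; ring.
Qed.

Lemma sLip_local d (g h : 'cV[R]_d -> R) x0 : near x0 (fun x => g x = h x) ->
  sLip g x0 -> sLip h x0.
Proof.
move=> E [L [hL H]]; exists L; split => //.
by apply: near2_mono (near2_and (near2_of_near E) H) => y z [[<- <-] h1].
Qed.

(* Caratheodory's characterisation of differentiability: g is differentiable
   at x iff g y - g x = phi(y) (y - x) with a slope phi continuous at x.
   Slopes combine algebraically, which yields the calculus rules below. *)
Definition carat d (g : 'cV[R]_d -> R) x (phi : 'cV[R]_d -> 'I_d -> R) :=
  near x (fun y => g y - g x = slin (phi y) (y - x)%R) /\ forall i, scont (fun y => phi y i) x.

Lemma carat_ptL d (g : 'cV[R]_d -> R) x phi : carat g x phi -> sptL g x.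
Proof.
move=> [E C].
have B := near_finite (fun i => scont_bound (C i)).
exists (\sum_i (Rabs (phi x i) + 1))%R; split.
  apply: sum_ge0 => i _; have := Rabs_pos (phi x i); move=> h; change (0 <= Rabs (phi x i) + 1); lra.
apply: near_mono (near_and E B) => y [e b]; rewrite e.
apply: Rle_trans (slin_bound _ _) _.
apply: Rmult_le_compat_r; first exact: vnorm_ge0.
by apply: sum_le => i _; apply: b.
Qed.

Lemma carat_cont d (g : 'cV[R]_d -> R) x phi : carat g x phi -> scont g x.
Proof. by move=> H; apply: sptL_cont (carat_ptL H). Qed.

Lemma carat_sder d (g : 'cV[R]_d -> R) x phi : carat g x phi -> sder g x (phi x).
Proof.
move=> [E C] eps he.
have hd : 0 < INR d + 1 by have := pos_INR d; lra.
have e1 : 0 < eps / (INR d + 1) by apply: Rdiv_lt_0_compat.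
have B := near_finite (fun i => C i _ e1).
apply: near_mono (near_and E B) => y [e b]; rewrite e slin_sub.
apply: Rle_trans (slin_bound _ _) _.
apply: Rmult_le_compat_r; first exact: vnorm_ge0.
apply: (Rle_trans _ (\sum_(i < d) (Rdiv eps (Rplus (INR d) 1)))%R).
  by apply: sum_le => i _; exact: (Rlt_le _ _ (b i)).
rewrite sum_const_ord.
have := pos_INR d; move: (INR d) hd e1 => k hd e1 hk.
apply: (Rle_trans _ ((k + 1) * (eps / (k + 1)))); first by apply: Rmult_le_compat_r; lra.
right; field; lra.
Qed.

(* The Caratheodory slope built from a candidate derivative D of g at x:
   the remainder g y - g x - D (y - x) is spread along the direction y - x. *)
Definition carat_slope d (g : 'cV[R]_d -> R) (x : 'cV[R]_d) (D : 'I_d -> R)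
    (y : 'cV[R]_d) (i : 'I_d) : R :=
  D i + (g y - g x - slin D (y - x)%R)
        / (\sum_k ((y - x)%R k ord0 * (y - x)%R k ord0))%R * (y - x)%R i ord0.

Lemma carat_slope_eq d (g : 'cV[R]_d -> R) x D y :
  g y - g x = slin (carat_slope g x D y) (y - x)%R.
Proof.
rewrite /carat_slope slin_add slin_self.
case: (Req_dec (\sum_k ((y - x)%R k ord0 * (y - x)%R k ord0))%R 0) => [hN|hN].
- have eyx : y = x by apply/eqP; rewrite -subr_eq0; apply/eqP; exact: sumsq_eq0 hN.
  by rewrite hN eyx subrr slin0 /Rdiv; ring.
- by rewrite /Rdiv Rmult_assoc Rinv_l // Rmult_1_r; ring.
Qed.

Lemma carat_slope_at d (g : 'cV[R]_d -> R) x D : carat_slope g x D x = D.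
Proof.
apply: functional_extensionality => i.
by rewrite /carat_slope subrr mxE Rmult_0_r Rplus_0_r.
Qed.

(* If D is the derivative of g at x, the slope is continuous at x: the
   extra term is bounded by |remainder| / |y - x|, which tends to 0. *)
Lemma carat_slope_cont d (g : 'cV[R]_d -> R) x D i :
  sder g x D -> scont (fun y => carat_slope g x D y i) x.
Proof.
move=> H eps he.
apply: near_mono (H _ (ltac:(lra) : 0 < eps / 2)) => y hy.
rewrite {2}/carat_slope subrr mxE Rmult_0_r Rplus_0_r /carat_slope.
have -> : forall a b : R, a + b - a = b by move=> a b; ring.
case: (Req_dec (\sum_k ((y - x)%R k ord0 * (y - x)%R k ord0))%R 0) => [hn|hn].
  rewrite hn /Rdiv Rinv_0 Rmult_0_r Rmult_0_l Rabs_R0; lra.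
have hv := vnorm_coord (y - x)%R i.
have sq := vnorm_sq (y - x)%R.
have v0 := vnorm_ge0 (y - x)%R.
rewrite /Rdiv !Rabs_mult Rabs_inv.
move: hy hv sq v0 hn.
move: (g y - g x - slin D (y - x)%R) ((y - x)%R i ord0)
  (\sum_k ((y - x)%R k ord0 * (y - x)%R k ord0))%R (vnorm (y - x)%R) => r a n v hy hv sq v0 hn.
have vp : 0 < v.
  apply: Rnot_le_lt => hv0; have v00 : v = 0 by lra.
  by rewrite v00 Rmult_0_l in sq; lra.
rewrite -sq Rabs_mult (Rabs_pos_eq v) //.
have ra := Rabs_pos r; have aa := Rabs_pos a.
have iv : 0 < / (v * v) by apply: Rinv_0_lt_compat; nra.
apply: (Rle_lt_trans _ (eps / 2 * v * / (v * v) * v)); last first.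
  have -> : eps / 2 * v * / (v * v) * v = eps / 2 by field; lra.
  lra.
apply: Rmult_le_compat => //; first by apply: Rmult_le_pos => //; lra.
by apply: Rmult_le_compat_r; lra.
Qed.

Lemma sder_carat d (g : 'cV[R]_d -> R) x D : sder g x D -> exists phi, carat g x phi /\ phi x = D.
Proof.
move=> H; exists (carat_slope g x D); split; last exact: carat_slope_at.
split; first by apply: near_all => y; apply: carat_slope_eq.
by move=> i; apply: carat_slope_cont.
Qed.

Lemma carat_const d (a : R) (x : 'cV[R]_d) : carat (fun _ => a) x (fun _ _ => 0).
Proof.
split; first by apply: near_all => y; rewrite slin_zero; ring.
by move=> i; apply: scont_const.
Qed.

Lemma carat_add d (g h : 'cV[R]_d -> R) x p q : carat g x p -> carat h x q ->
  carat (fun y => g y + h y) x (fun y i => p y i + q y i).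
Proof.
move=> [E1 C1] [E2 C2]; split.
  apply: near_mono (near_and E1 E2) => y [e1 e2]; rewrite slin_add -e1 -e2; ring.
by move=> i; apply: scont_add.
Qed.

Lemma carat_mul d (g h : 'cV[R]_d -> R) x p q : carat g x p -> carat h x q ->
  carat (fun y => g y * h y) x (fun y i => g y * q y i + h x * p y i).
Proof.
move=> Hg Hh; have Cg := carat_cont Hg.
move: Hg Hh => [E1 C1] [E2 C2]; split.
  apply: near_mono (near_and E1 E2) => y [e1 e2].
  by rewrite slin_add !slin_scale -e1 -e2; ring.
move=> i; apply: scont_add; apply: scont_mul => //; exact: scont_const.
Qed.

Lemma carat_inv d (g : 'cV[R]_d -> R) x p : carat g x p -> g x <> 0 ->
  carat (fun y => / g y) x (fun y i => - (/ g y * / g x) * p y i).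
Proof.
move=> Hg hg; have Cg := carat_cont Hg; have A := scont_away Cg hg.
have hp : 0 < Rabs (g x) by apply: Rabs_pos_lt.
move: Hg => [E C]; split.
  apply: near_mono (near_and E A) => y [e a].
  have gy : g y <> 0 by move=> z; rewrite z Rabs_R0 in a; lra.
  rewrite slin_scale -e; field; split => //.
move=> i; apply: scont_mul => //.
apply: (@scont_ext _ (fun y => -1 * (/ g y * / g x))); first by move=> y; ring.
apply: scont_mul; first exact: scont_const.
apply: scont_mul; [exact: scont_inv | exact: scont_const].
Qed.

Lemma carat_local d (g h : 'cV[R]_d -> R) x p : near x (fun y => g y = h y) ->
  carat g x p -> carat h x p.
Proof.
move=> E [E1 C]; split => //; have e0 := near_refl E.
by apply: near_mono (near_and E E1) => y [<- e]; rewrite -e0.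
Qed.

Lemma sder_cont d (g : 'cV[R]_d -> R) x D : sder g x D -> scont g x.
Proof. by move=> /sder_carat [p [H _]]; apply: carat_cont H. Qed.

Lemma sder_const d (a : R) (x : 'cV[R]_d) : sder (fun _ => a) x (fun _ => 0).
Proof. exact: (carat_sder (carat_const a x)). Qed.

Lemma sder_add d (g h : 'cV[R]_d -> R) x Dg Dh : sder g x Dg -> sder h x Dh ->
  sder (fun y => g y + h y) x (fun i => Dg i + Dh i).
Proof.
move=> /sder_carat [p [Hp <-]] /sder_carat [q [Hq <-]].
exact: (carat_sder (carat_add Hp Hq)).
Qed.

Lemma sder_mul d (g h : 'cV[R]_d -> R) x Dg Dh : sder g x Dg -> sder h x Dh ->
  sder (fun y => g y * h y) x (fun i => g x * Dh i + h x * Dg i).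
Proof.
move=> /sder_carat [p [Hp <-]] /sder_carat [q [Hq <-]].
exact: (carat_sder (carat_mul Hp Hq)).
Qed.

Lemma sder_inv d (g : 'cV[R]_d -> R) x Dg : sder g x Dg -> g x <> 0 ->
  sder (fun y => / g y) x (fun i => - (/ g x * / g x) * Dg i).
Proof.
move=> /sder_carat [p [Hp <-]] hg.
exact: (carat_sder (carat_inv Hp hg)).
Qed.

Lemma sder_local d (g h : 'cV[R]_d -> R) x D : near x (fun y => g y = h y) ->
  sder g x D -> sder h x D.
Proof.
move=> E /sder_carat [p [Hp <-]].
exact: (carat_sder (carat_local E Hp)).
Qed.

Lemma sC1_cont d (g : 'cV[R]_d -> R) x0 : sC1 g x0 -> scont g x0.
Proof. by move=> [D [H _]]; apply: sder_cont (near_refl H). Qed.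

Lemma sC1_const d (a : R) (x0 : 'cV[R]_d) : sC1 (fun _ => a) x0.
Proof.
exists (fun _ _ => 0); split; first by apply: near_all => x; apply: sder_const.
by move=> i; apply: scont_const.
Qed.

Lemma sC1_add d (g h : 'cV[R]_d -> R) x0 : sC1 g x0 -> sC1 h x0 -> sC1 (fun x => g x + h x) x0.
Proof.
move=> [Dg [Hg Cg]] [Dh [Hh Ch]].
exists (fun x i => Dg x i + Dh x i); split.
  by apply: near_mono (near_and Hg Hh) => x [a b]; apply: sder_add.
by move=> i; apply: scont_add.
Qed.

Lemma sC1_mul d (g h : 'cV[R]_d -> R) x0 : sC1 g x0 -> sC1 h x0 -> sC1 (fun x => g x * h x) x0.
Proof.
move=> G H; have cg := sC1_cont G; have ch := sC1_cont H.
move: G H => [Dg [Hg Cg]] [Dh [Hh Ch]].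
exists (fun x i => g x * Dh x i + h x * Dg x i); split.
  by apply: near_mono (near_and Hg Hh) => x [a b]; apply: sder_mul.
by move=> i; apply: scont_add; apply: scont_mul.
Qed.

Lemma sC1_inv d (g : 'cV[R]_d -> R) x0 : sC1 g x0 -> g x0 <> 0 -> sC1 (fun x => / g x) x0.
Proof.
move=> G hg; have cg := sC1_cont G; have A := scont_away cg hg.
have hp : 0 < Rabs (g x0) by apply: Rabs_pos_lt.
move: G => [Dg [Hg Cg]].
exists (fun x i => - (/ g x * / g x) * Dg x i); split.
  apply: near_mono (near_and Hg A) => x [a b]; apply: sder_inv => //.
  by move=> z; rewrite z Rabs_R0 in b; lra.
move=> i; apply: scont_mul => //.
apply: (@scont_ext _ (fun y => -1 * (/ g y * / g y))); first by move=> y; ring.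
apply: scont_mul; first exact: scont_const.
by apply: scont_mul; apply: scont_inv.
Qed.

Lemma sC1_local d (g h : 'cV[R]_d -> R) x0 : near x0 (fun x => g x = h x) -> sC1 g x0 -> sC1 h x0.
Proof.
move=> E [D [H C]]; exists D; split => //.
by apply: near_mono (near_and (near_near E) H) => x [e s]; apply: sder_local e s.
Qed.

Lemma sreg_cont c d (g : 'cV[R]_d -> R) x0 : sreg c g x0 -> scont g x0.
Proof.
case: c => /=.
- by [].
- exact: sptL_cont.
- by move=> H; apply: sptL_cont; apply: sLip_ptL.
- by move=> [D H]; apply: sder_cont H.
- exact: sC1_cont.
Qed.

Lemma sreg_const c d (a : R) (x0 : 'cV[R]_d) : sreg c (fun _ => a) x0.
Proof.
case: c => /=.
- exact: scont_const.
- exact: sptL_const.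
- exact: sLip_const.
- by exists (fun _ => 0); apply: sder_const.
- exact: sC1_const.
Qed.

Lemma sreg_add c d (g h : 'cV[R]_d -> R) x0 : sreg c g x0 -> sreg c h x0 -> sreg c (fun x => g x + h x) x0.
Proof.
case: c => /=.
- exact: scont_add.
- exact: sptL_add.
- exact: sLip_add.
- by move=> [D1 H1] [D2 H2]; eexists; apply: sder_add H1 H2.
- exact: sC1_add.
Qed.

Lemma sreg_mul c d (g h : 'cV[R]_d -> R) x0 : sreg c g x0 -> sreg c h x0 -> sreg c (fun x => g x * h x) x0.
Proof.
case: c => /=.
- exact: scont_mul.
- exact: sptL_mul.
- exact: sLip_mul.
- by move=> [D1 H1] [D2 H2]; eexists; apply: sder_mul H1 H2.
- exact: sC1_mul.
Qed.

Lemma sreg_inv c d (g : 'cV[R]_d -> R) x0 : sreg c g x0 -> g x0 <> 0 -> sreg c (fun x => / g x) x0.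
Proof.
case: c => /=.
- exact: scont_inv.
- exact: sptL_inv.
- exact: sLip_inv.
- by move=> [D1 H1] hg; eexists; apply: sder_inv H1 hg.
- exact: sC1_inv.
Qed.

Lemma sreg_local c d (g h : 'cV[R]_d -> R) x0 : near x0 (fun x => g x = h x) -> sreg c g x0 -> sreg c h x0.
Proof.
case: c => /= E.
- exact: scont_local.
- exact: sptL_local.
- exact: sLip_local.
- by move=> [D1 H1]; eexists; apply: sder_local H1.
- exact: sC1_local.
Qed.

Lemma sreg_ext c d (g h : 'cV[R]_d -> R) x0 : (forall x, g x = h x) -> sreg c g x0 -> sreg c h x0.
Proof. by move=> E; apply: sreg_local; apply: near_all. Qed.

Lemma sreg_sum c d (x0 : 'cV[R]_d) (I : Type) (r : seq I) (P : pred I) (F : I -> 'cV[R]_d -> R) :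
  (forall i, P i -> sreg c (F i) x0) -> sreg c (fun x => \sum_(i <- r | P i) F i x)%R x0.
Proof.
move=> H; elim: r => [|a r IH].
  by apply: (sreg_ext (g := fun _ => 0)); [move=> x; rewrite big_nil | apply: sreg_const].
case Pa: (P a).
  apply: (sreg_ext (g := fun x => F a x + \sum_(i <- r | P i) F i x)%R).
    by move=> x; rewrite big_cons Pa.
  by apply: sreg_add => //; apply: H.
by apply: (sreg_ext (g := fun x => \sum_(i <- r | P i) F i x)%R) => // x; rewrite big_cons Pa.
Qed.

Lemma sreg_prod c d (x0 : 'cV[R]_d) (I : Type) (r : seq I) (P : pred I) (F : I -> 'cV[R]_d -> R) :
  (forall i, P i -> sreg c (F i) x0) -> sreg c (fun x => \prod_(i <- r | P i) F i x)%R x0.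
Proof.
move=> H; elim: r => [|a r IH].
  by apply: (sreg_ext (g := fun _ => 1)); [move=> x; rewrite big_nil | apply: sreg_const].
case Pa: (P a).
  apply: (sreg_ext (g := fun x => F a x * \prod_(i <- r | P i) F i x)%R).
    by move=> x; rewrite big_cons Pa.
  by apply: sreg_mul => //; apply: H.
by apply: (sreg_ext (g := fun x => \prod_(i <- r | P i) F i x)%R) => // x; rewrite big_cons Pa.
Qed.

Definition specnorm_set p q (M : 'M[R]_(p, q)) :=
  fun r => exists v : 'cV[R]_q, vnorm v <= 1 /\ r = vnorm (M *m v)%R.

Definition entry_sum p q (M : 'M[R]_(p, q)) : R := (\sum_i \sum_j Rabs (M i j))%R.

Lemma specnorm_set_bounded p q (M : 'M[R]_(p, q)) : is_upper_bound (specnorm_set M) (entry_sum M).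
Proof.
move=> r [v [hv ->]].
apply: Rle_trans (vnorm_le_sum _) _.
apply: sum_le => i _; rewrite mxE.
apply: Rle_trans (Rabs_sum _ _ _) _.
apply: sum_le => j _.
change (Rabs (M i j * v j ord0) <= Rabs (M i j)).
rewrite Rabs_mult; rewrite -[X in _ <= X]Rmult_1_r.
apply: Rmult_le_compat_l; first exact: Rabs_pos.
by apply: Rle_trans (vnorm_coord v j) hv.
Qed.

Lemma specnorm_lub p q (M : 'M[R]_(p, q)) : is_lub (specnorm_set M) (specnorm M).
Proof.
rewrite /specnorm; apply: epsilon_spec.
have h0 : vnorm (0 : 'cV[R]_q)%R <= 1 by rewrite vnorm0; lra.
have [m Hm] := completeness (specnorm_set M) (ex_intro _ _ (@specnorm_set_bounded _ _ M))
  (ex_intro _ (vnorm (M *m 0)%R) (ex_intro _ 0%R (conj h0 erefl))).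
by exists m.
Qed.

Lemma specnorm_le p q (M : 'M[R]_(p, q)) : specnorm M <= entry_sum M.
Proof. by have [_ H] := specnorm_lub M; apply: H; apply: (@specnorm_set_bounded _ _ M). Qed.

Lemma vnorm_delta q (j : 'I_q) : vnorm (delta_mx j ord0 : 'cV[R]_q) <= 1.
Proof.
apply: Rle_trans (vnorm_le_sum _) _.
rewrite (bigD1 j) //= big1 => [|k hk]; last by rewrite mxE (negPf hk) /= Rabs_R0.
rewrite mxE !eqxx /=; change (Rabs 1 + 0 <= 1); rewrite Rabs_R1; lra.
Qed.

Lemma specnorm_entry p q (M : 'M[R]_(p, q)) i j : Rabs (M i j) <= specnorm M.
Proof.
have [H _] := specnorm_lub M.
apply: Rle_trans (H _ (ex_intro _ _ (conj (vnorm_delta j) erefl))).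
by rewrite -colE; have := vnorm_coord (col j M) i; rewrite mxE.
Qed.

Lemma entry_sum_le p q (M : 'M[R]_(p, q)) e : (forall i j, Rabs (M i j) <= e) ->
  entry_sum M <= INR p * (INR q * e).
Proof.
move=> H; rewrite /entry_sum.
apply: (Rle_trans _ (\sum_(i < p) (Rmult (INR q) e))%R); last by rewrite sum_const_ord; right.
apply: sum_le => i _.
apply: (Rle_trans _ (\sum_(j < q) e)%R); last by rewrite sum_const_ord; right.
by apply: sum_le => j _; apply: H.
Qed.

Lemma specnorm_small p q (M : 'M[R]_(p, q)) e : (forall i j, Rabs (M i j) <= e) ->
  specnorm M <= INR p * (INR q * e).
Proof. by move=> H; apply: Rle_trans (specnorm_le M) (entry_sum_le H). Qed.

Lemma subE p q (A B : 'M[R]_(p, q)) i j : (A - B)%R i j = A i j - B i j.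
Proof. by rewrite !mxE. Qed.

Lemma applinE d p q (Df : 'I_d -> 'M[R]_(p, q)) h i j :
  applin Df h i j = slin (fun k => Df k i j) h.
Proof. rewrite /applin summxE; apply: eq_bigr => k _; by rewrite mxE. Qed.

Lemma pq_small p q eps : 0 < eps -> exists e, 0 < e /\ INR p * (INR q * e) < eps.
Proof.
move=> he; have hp := pos_INR p; have hq := pos_INR q.
exists (eps / (INR p * INR q + 1)); split.
  by apply: Rdiv_lt_0_compat => //; nra.
move: hp hq; move: (INR p) (INR q) => a b hp hq.
have h1 : 0 < a * b + 1 by nra.
have -> : a * (b * (eps / (a * b + 1))) = eps * (a * b / (a * b + 1)) by field; lra.
rewrite -[X in _ < X]Rmult_1_r; apply: Rmult_lt_compat_l => //.
have -> : a * b / (a * b + 1) = 1 - / (a * b + 1) by field; lra.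
have := Rinv_0_lt_compat _ h1; lra.
Qed.

Lemma arith_pq (a b L v : R) : a * (b * (L * v)) = (a * (b * L)) * v.
Proof. ring. Qed.

Lemma pq_nonneg p q L : 0 <= L -> 0 <= INR p * (INR q * L).
Proof. move=> h; apply: Rmult_le_pos; first exact: pos_INR. apply: Rmult_le_pos => //; exact: pos_INR. Qed.

Definition mxreg c d p q (F : 'cV[R]_d -> 'M[R]_(p, q)) x0 := forall i j, sreg c (fun x => F x i j) x0.

Lemma mxreg_C0 c d p q (F : 'cV[R]_d -> 'M[R]_(p, q)) x0 : mxreg c F x0 -> mxreg C0 F x0.
Proof. by move=> HF i j; apply: sreg_cont (HF i j). Qed.

Lemma cont_at_entrywise d p q (f : 'cV[R]_d -> 'M[R]_(p, q)) x0 :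
  cont_at f x0 <-> forall i j, scont (fun x => f x i j) x0.
Proof.
split.
  move=> H i j eps he; have [del [hd Hd]] := H eps he; exists del; split => // x hx.
  by rewrite -subE; apply: Rle_lt_trans (specnorm_entry _ i j) (Hd x hx).
move=> H eps he; have [e [he1 he2]] := pq_small p q he.
have [del [hd Hd]] := near_finite (fun ij : 'I_p * 'I_q => H ij.1 ij.2 e he1).
exists del; split => // x hx.
apply: Rle_lt_trans he2.
apply: specnorm_small => i j; rewrite subE; apply: Rlt_le.
exact: (Hd x hx (i, j)).
Qed.

Lemma Frechet_deriv_entrywise d p q (f : 'cV[R]_d -> 'M[R]_(p, q)) x Df :
  has_Frechet_deriv f x Df <-> forall i j, sder (fun y => f y i j) x (fun k => Df k i j).
Proof.
split.
  move=> H i j eps he; have [del [hd Hd]] := H eps he; exists del; split => // y hy.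
  by rewrite -applinE -!subE; apply: Rle_trans (specnorm_entry _ i j) (Hd y hy).
move=> H eps he; have [e [he1 he2]] := pq_small p q he.
have [del [hd Hd]] := near_finite (fun ij : 'I_p * 'I_q => H ij.1 ij.2 e he1).
exists del; split => // y hy.
have v0 := vnorm_ge0 (y - x)%R.
apply: (Rle_trans _ (INR p * (INR q * (e * vnorm (y - x)%R)))).
  apply: specnorm_small => i j; rewrite !subE applinE.
  exact: (Hd y hy (i, j)).
have hp := pos_INR p; have hq := pos_INR q.
move: v0 he2 hp hq; move: (vnorm (y - x)%R) (INR p) (INR q) => v a b v0 he2 hp hq.
have -> : a * (b * (e * v)) = (a * (b * e)) * v by ring.
by apply: Rmult_le_compat_r => //; lra.
Qed.

Lemma ptLipschitz_entrywise d p q (f : 'cV[R]_d -> 'M[R]_(p, q)) x0 :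
  ptLipschitz_at f x0 <-> mxreg CLp f x0.
Proof.
rewrite /mxreg /=; split.
  move=> [r [L [hr [hL H]]]] i j; exists L; split => //; exists r; split => // x hx.
  by rewrite -subE; apply: Rle_trans (specnorm_entry _ i j) (H x hx).
move=> H.
have [L HL] := @fin_ub ('I_p * 'I_q)%type (fun ij L =>
   near x0 (fun x => Rabs (f x ij.1 ij.2 - f x0 ij.1 ij.2) <= L * vnorm (x - x0)%R))
  ltac:(move=> ij a b hab N;
        apply: near_mono N => x hx; apply: Rle_trans hx _;
        apply: Rmult_le_compat_r => //; exact: vnorm_ge0)
  (fun ij => let: ex_intro L (conj _ N) := H ij.1 ij.2 in ex_intro _ L N).
have N : near x0 (fun x => forall ij : 'I_p * 'I_q,
    Rabs (f x ij.1 ij.2 - f x0 ij.1 ij.2) <= Rmax L 0 * vnorm (x - x0)%R).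
  apply: near_finite => ij; apply: near_mono (HL ij) => x hx.
  apply: Rle_trans hx _; apply: Rmult_le_compat_r; [exact: vnorm_ge0 | exact: Rmax_l].
have [r [hr Hr]] := N.
exists r, (INR p * (INR q * Rmax L 0)); split => //; split; first by apply: pq_nonneg; apply: Rmax_r.
move=> x hx; rewrite -arith_pq; apply: specnorm_small => i j; rewrite subE.
exact: (Hr x hx (i, j)).
Qed.

Lemma Lipschitz_entrywise d p q (f : 'cV[R]_d -> 'M[R]_(p, q)) x0 :
  Lipschitz_near f x0 <-> mxreg CL f x0.
Proof.
rewrite /mxreg /=; split.
  move=> [r [L [hr [hL H]]]] i j; exists L; split => //; exists r; split => // y z hy hz.
  by rewrite -subE; apply: Rle_trans (specnorm_entry _ i j) (H y z hy hz).
move=> H.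
have [L HL] := @fin_ub ('I_p * 'I_q)%type (fun ij L =>
   near2 x0 (fun y z => Rabs (f y ij.1 ij.2 - f z ij.1 ij.2) <= L * vnorm (y - z)%R))
  ltac:(move=> ij a b hab N;
        apply: near2_mono N => y z hx; apply: Rle_trans hx _;
        apply: Rmult_le_compat_r => //; exact: vnorm_ge0)
  (fun ij => let: ex_intro L (conj _ N) := H ij.1 ij.2 in ex_intro _ L N).
have N : near2 x0 (fun y z => forall ij : 'I_p * 'I_q,
    Rabs (f y ij.1 ij.2 - f z ij.1 ij.2) <= Rmax L 0 * vnorm (y - z)%R).
  apply: near2_finite => ij; apply: near2_mono (HL ij) => y z hx.
  apply: Rle_trans hx _; apply: Rmult_le_compat_r; [exact: vnorm_ge0 | exact: Rmax_l].
have [r [hr Hr]] := N.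
exists r, (INR p * (INR q * Rmax L 0)); split => //; split; first by apply: pq_nonneg; apply: Rmax_r.
move=> y z hy hz; rewrite -arith_pq; apply: specnorm_small => i j; rewrite subE.
exact: (Hr y z hy hz (i, j)).
Qed.

Lemma Frechet_entrywise d p q (f : 'cV[R]_d -> 'M[R]_(p, q)) x0 :
  Frechet_diff_at f x0 <-> mxreg C1p f x0.
Proof.
rewrite /mxreg /=; split.
  by move=> [Df H] i j; exists (fun k => Df k i j); move: i j; apply/Frechet_deriv_entrywise.
move=> H.
have [Dfun HD] := @fin_choice ('I_p * 'I_q)%type _
  (fun ij D => sder (fun x => f x ij.1 ij.2) x0 D) (fun ij => H ij.1 ij.2).
exists (fun k => \matrix_(i, j) Dfun (i, j) k)%R; apply/Frechet_deriv_entrywise => i j.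
have -> : (fun k => (\matrix_(i, j) Dfun (i, j) k)%R i j) = Dfun (i, j).
  by apply: functional_extensionality => k; rewrite mxE.
exact: (HD (i, j)).
Qed.

Lemma C1_entrywise d p q (f : 'cV[R]_d -> 'M[R]_(p, q)) x0 :
  C1_at f x0 <-> mxreg Defs.C1 f x0.
Proof.
rewrite /mxreg /=; split.
  move=> [r [Df [hr [Hd Hc]]]] i j; exists (fun x k => Df x k i j); split.
    exists r; split => // x hx; move: i j; apply/Frechet_deriv_entrywise; exact: Hd.
  by move=> k; move: i j; apply/cont_at_entrywise; exact: Hc.
move=> H.
have [Dfun HD] := @fin_choice ('I_p * 'I_q)%type _ (fun ij D =>
   near x0 (fun x => sder (fun y => f y ij.1 ij.2) x (D x)) /\ forall k, scont (fun x => D x k) x0)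
  (fun ij => H ij.1 ij.2).
have [r [hr Hr]] := near_finite (fun ij => (HD ij).1).
exists r, (fun x k => \matrix_(i, j) Dfun (i, j) x k)%R; split => //; split.
  move=> x hx; apply/Frechet_deriv_entrywise => i j.
  have -> : (fun k => (\matrix_(i, j) Dfun (i, j) x k)%R i j) = Dfun (i, j) x.
    by apply: functional_extensionality => k; rewrite mxE.
  exact: (Hr x hx (i, j)).
move=> k; apply/cont_at_entrywise => i j.
apply: (scont_ext (f := fun x => Dfun (i, j) x k)); first by move=> x; rewrite mxE.
exact: ((HD (i, j)).2 k).
Qed.

Lemma inC_entrywise c d p q (f : 'cV[R]_d -> 'M[R]_(p, q)) x0 : inC c f x0 <-> mxreg c f x0.
Proof.
case: c.
- exact: cont_at_entrywise.
- exact: ptLipschitz_entrywise.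
- exact: Lipschitz_entrywise.
- exact: Frechet_entrywise.
- exact: C1_entrywise.
Qed.

Lemma mxreg_const (c : regclass) (d : nat) (x0 : 'cV[R]_d) p q (M : 'M[R]_(p, q)) : mxreg c (fun _ => M) x0.
Proof. by move=> i j; apply: sreg_const. Qed.

Lemma mxreg_sub (c : regclass) (d : nat) (x0 : 'cV[R]_d) p q (F G : 'cV[R]_d -> 'M[R]_(p, q)) : mxreg c F x0 -> mxreg c G x0 ->
  mxreg c (fun x => F x - G x)%R x0.
Proof.
move=> HF HG i j; apply: (sreg_ext (g := fun x => F x i j + (-1) * G x i j)).
  by move=> x; rewrite !mxE; change (F x i j + -1 * G x i j = F x i j + - G x i j); ring.
by apply: sreg_add => //; apply: sreg_mul => //; apply: sreg_const.
Qed.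

Lemma mxreg_mul (c : regclass) (d : nat) (x0 : 'cV[R]_d) p q r (F : 'cV[R]_d -> 'M[R]_(p, q)) (G : 'cV[R]_d -> 'M[R]_(q, r)) :
  mxreg c F x0 -> mxreg c G x0 -> mxreg c (fun x => F x *m G x)%R x0.
Proof.
move=> HF HG i j; apply: (sreg_ext (g := fun x => \sum_k (F x i k * G x k j))%R).
  by move=> x; rewrite mxE.
by apply: sreg_sum => k _; apply: sreg_mul.
Qed.

Lemma mxreg_tr (c : regclass) (d : nat) (x0 : 'cV[R]_d) p q (F : 'cV[R]_d -> 'M[R]_(p, q)) : mxreg c F x0 -> mxreg c (fun x => (F x)^T)%R x0.
Proof.
move=> HF i j; apply: (sreg_ext (g := fun x => F x j i)); first by move=> x; rewrite mxE.
exact: HF.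
Qed.

Lemma sreg_det (c : regclass) (d : nat) (x0 : 'cV[R]_d) n (F : 'cV[R]_d -> 'M[R]_n) : mxreg c F x0 -> sreg c (fun x => (\det (F x))%R) x0.
Proof.
move=> HF.
apply: (sreg_ext (g := fun x => \sum_(s : 'S_n) ((-1) ^+ s * \prod_i F x i (s i)))%R) => //.
apply: sreg_sum => s _; apply: sreg_mul; first exact: sreg_const.
by apply: sreg_prod => i _; apply: HF.
Qed.

Lemma mxreg_minor (c : regclass) (d : nat) (x0 : 'cV[R]_d) n (F : 'cV[R]_d -> 'M[R]_n.+1) i j : mxreg c F x0 ->
  mxreg c (fun x => row' i (col' j (F x))) x0.
Proof.
move=> HF k l; apply: (sreg_ext (g := fun x => F x (lift i k) (lift j l))).
  by move=> x; rewrite !mxE.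
exact: HF.
Qed.

Lemma mxreg_adj (c : regclass) (d : nat) (x0 : 'cV[R]_d) n (F : 'cV[R]_d -> 'M[R]_n) : mxreg c F x0 -> mxreg c (fun x => (\adj (F x))%R) x0.
Proof.
case: n F => [|n] F HF i j; first by case: i.
apply: (sreg_ext (g := fun x => (-1) ^+ (j + i) * \det (row' j (col' i (F x))))%R).
  by move=> x; rewrite mxE.
by apply: sreg_mul; [apply: sreg_const | apply: sreg_det; apply: mxreg_minor].
Qed.

Lemma det_nz k (X : 'M[R]_k) : X \in unitmx -> (\det X)%R <> 0.
Proof. by rewrite unitmxE unitfE => /eqP. Qed.

Lemma mxreg_inv (c : regclass) (d : nat) (x0 : 'cV[R]_d) n (F : 'cV[R]_d -> 'M[R]_n) : mxreg c F x0 -> (\det (F x0))%R <> 0 ->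
  mxreg c (fun x => invmx (F x)) x0.
Proof.
move=> HF h0.
have Hd := sreg_det HF.
have A := scont_away (sreg_cont Hd) h0.
have hp : 0 < Rabs ((\det (F x0))%R) by apply: Rabs_pos_lt.
move=> i j.
apply: (sreg_local (g := fun x => / (\det (F x))%R * (\adj (F x))%R i j)).
  apply: near_mono A => x hx.
  have nz : (\det (F x))%R <> 0 by move=> z; rewrite z Rabs_R0 in hx; lra.
  rewrite /invmx unitmxE unitfE.
  have -> : ((\det (F x))%R != 0) = true by apply/eqP.
  by rewrite /= [RHS]mxE R_invE.
apply: sreg_mul; first exact: sreg_inv.
exact: mxreg_adj.
Qed.

Lemma mxreg_local (c : regclass) (d : nat) (x0 : 'cV[R]_d) p q (F G : 'cV[R]_d -> 'M[R]_(p, q)) : near x0 (fun x => F x = G x) ->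
  mxreg c F x0 -> mxreg c G x0.
Proof.
move=> E HF i j; apply: (sreg_local (g := fun x => F x i j)) => //.
by apply: near_mono E => x ->.
Qed.

Local Open Scope ring_scope.

Lemma pinv_unique m n (A : 'M[R]_(m, n)) B C : is_pinv A B -> is_pinv A C -> B = C.
Proof.
move=> [h1 h2 h3 h4] [k1 k2 k3 k4].
have eAB : A *m B = A *m C.
  rewrite -h3 trmx_mul -{1}k1 !trmx_mul mulmxA -trmx_mul h3 -trmx_mul k3 mulmxA h1 //.
have eBA : B *m A = C *m A.
  rewrite -h4 trmx_mul -{1}k1 !trmx_mul mulmxA -mulmxA -trmx_mul -trmx_mul k4 h4.
  by rewrite !mulmxA -(mulmxA C A B) -(mulmxA C (A *m B) A) h1.
by rewrite -h2 -mulmxA eAB mulmxA eBA k2.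
Qed.

Lemma gram_unit m r (F : 'M[R]_(m, r)) : \rank F = r -> F^T *m F \in unitmx.
Proof.
move=> hF; rewrite -row_free_unit; apply: inj_row_free => v hv.
set u := F *m v^T.
have hu : u^T *m u = 0 by rewrite /u trmx_mul trmxK mulmxA -(mulmxA v) hv mul0mx.
have su : (\sum_k (u k ord0 * u k ord0))%R = 0%R.
  transitivity ((u^T *m u) ord0 ord0); last by rewrite hu mxE.
  rewrite [RHS]mxE; apply: eq_bigr => k _; rewrite [u^T _ _]mxE //.
have u0 := sumsq_eq0 su.
have : v *m F^T = 0 by rewrite -[v]trmxK -trmx_mul -/u u0 trmx0.
move/eqP; rewrite mulmx_free_eq0 ?(eqP _) //.
  by move/eqP.
by rewrite /row_free mxrank_tr hF.
Qed.

Definition pinv_of_factors m r n (F : 'M[R]_(m, r)) (G : 'M[R]_(r, n)) : 'M[R]_(n, m) :=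
  G^T *m invmx (G *m G^T) *m invmx (F^T *m F) *m F^T.

Lemma sym_inv k (P : 'M[R]_k) : P^T = P -> (invmx P)^T = invmx P.
Proof. by move=> h; rewrite trmx_inv h. Qed.

Lemma pinv_of_factorsP m r n (F : 'M[R]_(m, r)) (G : 'M[R]_(r, n)) :
  \rank F = r -> \rank G = r -> is_pinv (F *m G) (pinv_of_factors F G).
Proof.
move=> hF hG.
have uP := gram_unit hF.
have uQ : G *m G^T \in unitmx by have := gram_unit (F := G^T); rewrite mxrank_tr trmxK; apply.
set P := F^T *m F; set Q := G *m G^T.
have sP : P^T = P by rewrite /P trmx_mul trmxK.
have sQ : Q^T = Q by rewrite /Q trmx_mul trmxK.
have eAB : F *m G *m pinv_of_factors F G = F *m invmx P *m F^T.
  rewrite /pinv_of_factors !mulmxA -(mulmxA F G G^T) -/Q -(mulmxA F Q) mulmxV // mulmx1.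
  by rewrite -/P.
have eBA : pinv_of_factors F G *m (F *m G) = G^T *m invmx Q *m G.
  rewrite /pinv_of_factors !mulmxA -/P -/Q -(mulmxA _ F^T F) -/P -(mulmxA _ (invmx P) P) mulVmx //.
  by rewrite mulmx1.
split.
- rewrite eAB !mulmxA -(mulmxA _ F^T F) -/P -(mulmxA F (invmx P) P) mulVmx // mulmx1 //.
- rewrite eBA /pinv_of_factors !mulmxA -/P -/Q -(mulmxA _ G G^T) -/Q -(mulmxA G^T (invmx Q) Q) mulVmx //.
  by rewrite mulmx1.
- by rewrite eAB !trmx_mul trmxK (sym_inv sP) mulmxA.
- by rewrite eBA !trmx_mul trmxK (sym_inv sQ) mulmxA.
Qed.

(* Every matrix has a full-rank factorisation (through its Gaussian
   elimination), so [pinv A] does satisfy the Penrose equations and is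
   computed by [pinv_of_factors] on any full-rank factorisation. *)
Lemma pinv_spec m n (A : 'M[R]_(m, n)) : is_pinv A (pinv A).
Proof.
rewrite /pinv; apply: epsilon_spec.
set r := \rank A.
have rm : (r <= m)%N by apply: rank_leq_row.
have rn : (r <= n)%N by apply: rank_leq_col.
pose F := col_ebase A *m (pid_mx r : 'M_(m, r)).
pose G := (pid_mx r : 'M_(r, n)) *m row_ebase A.
have eA : F *m G = A.
  rewrite /F /G mulmxA -(mulmxA _ _ (pid_mx r)) mul_pid_mx !minnn.
  exact: mulmx_ebase.
have hF : \rank F = r.
  by rewrite /F eqmxMfull ?rank_pid_mx // row_full_unit col_ebase_unit.
have hG : \rank G = r.
  by rewrite /G mxrankMfree ?rank_pid_mx // row_free_unit row_ebase_unit.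
by exists (pinv_of_factors F G); rewrite -eA; apply: pinv_of_factorsP.
Qed.

Lemma pinvE m r n (A : 'M[R]_(m, n)) (F : 'M[R]_(m, r)) (G : 'M[R]_(r, n)) :
  A = F *m G -> \rank F = r -> \rank G = r -> pinv A = pinv_of_factors F G.
Proof.
by move=> eA hF hG; apply: pinv_unique (pinv_spec A) _; rewrite eA; apply: pinv_of_factorsP.
Qed.

Lemma rank_selector m n (A : 'M[R]_(m, n)) :
  exists (S : 'M[R]_(\rank A, m)) (T : 'M[R]_(n, \rank A)), S *m A *m T = 1%:M.
Proof.
set r := \rank A.
have rm : (r <= m)%N by apply: rank_leq_row.
have rn : (r <= n)%N by apply: rank_leq_col.
exists ((pid_mx r : 'M_(r, m)) *m invmx (col_ebase A)), (invmx (row_ebase A) *m (pid_mx r : 'M_(n, r))).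
rewrite -{2}[A]mulmx_ebase.
rewrite !mulmxA -(mulmxA (pid_mx r) (invmx (col_ebase A)) (col_ebase A)) mulVmx ?col_ebase_unit // mulmx1.
rewrite -(mulmxA _ (row_ebase A) (invmx (row_ebase A))) mulmxV ?row_ebase_unit // mulmx1.
rewrite !mul_pid_mx (_ : minn _ _ = r) ?pid_mx_1 //.
rewrite -/r; lia.
Qed.

Lemma local_rank_factorization m n k (A : 'M[R]_(m, n)) (S : 'M[R]_(k, m)) (T : 'M[R]_(n, k)) :
  \rank A = k -> S *m A *m T \in unitmx ->
  [/\ A = (A *m T) *m (invmx (S *m A *m T) *m S *m A),
      \rank (A *m T) = k & \rank (invmx (S *m A *m T) *m S *m A) = k].
Proof.
move=> hA hu; set M := S *m A *m T.
have hM : \rank M = k by apply: mxrank_unit.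
have e1 : \rank (S *m A) = \rank A.
  apply/eqP; rewrite eqn_leq mxrankM_maxr /= hA -{1}hM.
  exact: mxrankM_maxl.
have sub : (A <= S *m A)%MS.
  have := (mxrank_leqif_eq (submxMl S A)).2; rewrite e1 eqxx => /esym /andP [_ ->] //.
have [W eW] := submxP sub.
have eAT : A *m T = W *m M by rewrite {1}eW !mulmxA.
have eWv : W = A *m T *m invmx M by rewrite eAT mulmxK.
split.
- by rewrite {1}eW eWv !mulmxA.
- apply/eqP; rewrite eqn_leq rank_leq_col /= -{1}hM /M -mulmxA.
  exact: mxrankM_maxr.
- apply/eqP; rewrite eqn_leq rank_leq_row /=.
  have : invmx M *m S *m A *m T = 1%:M by rewrite -!mulmxA (mulmxA S) -/M mulVmx.
  move=> e2; rewrite -{1}(mxrank1 R k) -e2.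
  exact: mxrankM_maxl.
Qed.

Local Close Scope ring_scope.

Lemma unitmx_near d k (M : 'cV[R]_d -> 'M[R]_k) x0 :
  mxreg C0 M x0 -> M x0 \in unitmx -> near x0 (fun x => M x \in unitmx).
Proof.
move=> HM u0; have h0 := det_nz u0.
have hp : 0 < Rabs (\det (M x0))%R by apply: Rabs_pos_lt.
apply: near_mono (scont_away (sreg_det HM) h0) => x hx.
rewrite unitmxE unitfE; apply/eqP => z.
by rewrite z Rabs_R0 in hx; lra.
Qed.

(* Lower semicontinuity of the rank: the invertible k x k matrix
   S N(x0) T, k = rank N(x0), stays invertible near x0. *)
Lemma rank_lsc d p q (N : 'cV[R]_d -> 'M[R]_(p, q)) x0 : mxreg C0 N x0 ->
  near x0 (fun x => (\rank (N x0) <= \rank (N x))%N).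
Proof.
move=> HN; have [S [T e]] := rank_selector (N x0).
have hM : mxreg C0 (fun x => S *m N x *m T)%R x0.
  by apply: mxreg_mul; [apply: mxreg_mul => //; apply: mxreg_const | apply: mxreg_const].
have u0 : (S *m N x0 *m T)%R \in unitmx by rewrite e unitmx1.
apply: near_mono (unitmx_near hM u0) => x u.
rewrite -(mxrank_unit u).
exact: leq_trans (mxrankM_maxl (S *m N x)%R T) (mxrankM_maxr S (N x)).
Qed.

Lemma proj_rank_split m n (A : 'M[R]_(m, n)) :
  let P := (A *m pinv A)%R in
  [/\ \rank P = \rank A, (\rank P + \rank (1%:M - P)%R <= m)%N & (m <= \rank P + \rank (1%:M - P)%R)%N].
Proof.
move=> P; have [h1 h2 h3 h4] := pinv_spec A.
have idem : (P *m P = P)%R by rewrite /P mulmxA h1.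
split.
- apply/eqP; rewrite eqn_leq mxrankM_maxl /=.
  by rewrite -{1}h1; apply: mxrankM_maxl.
- have e0 : ((1%:M - P) *m P = 0)%R by rewrite mulmxBl mul1mx idem subrr.
  have := mxrank_mul_min (1%:M - P)%R P; rewrite e0 mxrank0; lia.
- have e1 : (P + (1%:M - P) = 1%:M)%R by rewrite addrC subrK.
  have := mxrank_add P (1%:M - P)%R; rewrite e1 mxrank1 //.
Qed.

(* Necessity: if A and A^+ are continuous at x0, the projections A A^+ and
   I - A A^+ are continuous; their ranks are lower semicontinuous and add up
   to m, so they are locally constant, and rank (A A^+) = rank A. *)
Lemma rank_locally_constant d m n (A : 'cV[R]_d -> 'M[R]_(m, n)) x0 :
  mxreg C0 A x0 -> mxreg C0 (fun x => pinv (A x)) x0 ->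
  near x0 (fun x => \rank (A x) = \rank (A x0)).
Proof.
move=> cA cB.
have cQ : mxreg C0 (fun x => 1%:M - A x *m pinv (A x))%R x0.
  by apply: mxreg_sub; [apply: mxreg_const | apply: mxreg_mul].
apply: near_mono (near_and (rank_lsc cA) (rank_lsc cQ)) => x [l1 l2].
have [f1 f2 f3] := proj_rank_split (A x); have [g1 g2 g3] := proj_rank_split (A x0).
move: l1 l2 f1 f2 f3 g1 g2 g3.
move: (\rank (A x)) (\rank (A x0)) (\rank (A x *m pinv (A x))%R) (\rank (A x0 *m pinv (A x0))%R)
  (\rank (1%:M - A x *m pinv (A x))%R) (\rank (1%:M - A x0 *m pinv (A x0))%R).
move=> a a0 p p0 q q0; lia.
Qed.

(* The explicit pseudoinverse of a full-rank factorisation F G is as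
   regular as the factors, the Gram matrices being invertible at x0. *)
Lemma pinv_of_factors_reg c d m k n (F : 'cV[R]_d -> 'M[R]_(m, k))
    (G : 'cV[R]_d -> 'M[R]_(k, n)) x0 :
  mxreg c F x0 -> mxreg c G x0 -> \rank (F x0) = k -> \rank (G x0) = k ->
  mxreg c (fun x => pinv_of_factors (F x) (G x)) x0.
Proof.
move=> hF hG rF rG.
have uF := det_nz (gram_unit rF).
have uG : (\det (G x0 *m (G x0)^T))%R <> 0.
  by apply: det_nz; have := gram_unit (F := (G x0)^T); rewrite trmxK mxrank_tr; apply.
rewrite /pinv_of_factors.
apply: mxreg_mul; last exact: mxreg_tr.
apply: mxreg_mul; last by apply: mxreg_inv => //; apply: mxreg_mul => //; apply: mxreg_tr.
apply: mxreg_mul; first exact: mxreg_tr.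
by apply: mxreg_inv => //; apply: mxreg_mul => //; apply: mxreg_tr.
Qed.

(* Sufficiency: with S A(x0) T = I_k, near x0 the matrix M = S A T is
   invertible and A = (A T) (M^-1 S A) is a full-rank factorisation whose
   factors are as regular as A; A^+ is then given by pinv_of_factors. *)
Lemma pinv_regular c d m n (A : 'cV[R]_d -> 'M[R]_(m, n)) x0 :
  mxreg c A x0 -> near x0 (fun x => \rank (A x) = \rank (A x0)) ->
  mxreg c (fun x => pinv (A x)) x0.
Proof.
move=> hA Hr.
have [S [T e]] := rank_selector (A x0).
set k := \rank (A x0) in S T e Hr.
pose M x := (S *m A x *m T)%R.
have hM : mxreg c M x0.
  by apply: mxreg_mul; [apply: mxreg_mul => //; apply: mxreg_const | apply: mxreg_const].
have u0 : M x0 \in unitmx by rewrite /M e unitmx1.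
have [_ rF rG] := local_rank_factorization (erefl k) u0.
have hB : mxreg c (fun x => pinv_of_factors (A x *m T) (invmx (M x) *m S *m A x))%R x0.
  apply: pinv_of_factors_reg => //; first by apply: mxreg_mul => //; apply: mxreg_const.
  apply: mxreg_mul => //; apply: mxreg_mul; last exact: mxreg_const.
  by apply: mxreg_inv => //; apply: det_nz.
apply: mxreg_local hB.
apply: near_mono (near_and (unitmx_near (mxreg_C0 hM) u0) Hr) => x [ux rx].
have [eA hFx hGx] := local_rank_factorization rx ux.
by apply: esym; apply: pinvE.
Qed.

Unset Implicit Arguments.

Theorem lemma4 (c : regclass) (d m n : nat) (x0 : 'cV[R]_d)
    (A : 'cV[R]_d -> 'M[R]_(m, n)) :
  inC c A x0 ->
  (inC c (fun x => pinv (A x)) x0 <->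
   exists r, 0 < r /\
     forall x, vnorm (x - x0)%R <= r -> \rank (A x) = \rank (A x0)).
Proof.
move=> /inC_entrywise hA; split.
- move=> /inC_entrywise hB.
  exact: rank_locally_constant (mxreg_C0 hA) (mxreg_C0 hB).
- by move=> Hr; apply/inC_entrywise; apply: pinv_regular.
Qed.
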